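(* Suppose $H$ satisfies (B1) and (B2), and for $\alpha>0$ let $v^\alpha$ be the viscosity solution of (DP) (satisfying $|v^\alpha|\le M/\alpha$, $M:=\sup|H(\cdot,0,\cdot)|$). Then there exist constants $M_1,M_2>0$, independent of $\alpha$, such that for all $\alpha>0$, $x,y\in\mathbb{T}^d$ and $\xi\in I$, $$\Big|\int_I k(\xi,\eta)\big(v^\alpha(x,\xi)-v^\alpha(y,\eta)\big)\,d\eta\Big|\le M_1+M_2\|Dv^\alpha\|_{L^\infty(\mathbb{T}^d\times I)}.$$
   Context: $I\subset\mathbb{R}$ finite interval, $|I|=1$; $k$ Borel measurable on $I\times I$ with $0<k_0\le k\le k_1$. $H\in C(\mathbb{T}^d\times\mathbb{R}^d)\otimes\mathcal{B}(I)$ with $H(\cdot,p,\cdot)$ bounded for each $p$. (DP): $\alpha v(x,\xi)+H(x,Dv(x,\xi),\xi)+\int_I k(\xi,\eta)(v(x,\xi)-v(x,\eta))d\eta=0$ in $\mathbb{T}^d\times I$ in the viscosity sense. (B1): $C_1|p|^m-C_2\le H(x,p,\xi)$ for constants $C_1,C_2>0$, $m>1$. (B2): for each $R>0$ a modulus $\omega_R$ with $|H(x,p,\xi)-H(y,p,\xi)|\le\omega_R(|x-y|)$ for $|p|\le R$. $v^\alpha(\cdot,\xi)$ is Lipschitz for each $\xi$, uniformly in $\xi$ (for fixed $\alpha$), so $\|Dv^\alpha\|_{L^\infty}$ is finite. *)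

From HB Require Import structures.
From mathcomp Require Import all_boot all_order all_algebra.
From mathcomp Require Import all_classical all_reals all_analysis.
Set Implicit Arguments. Unset Strict Implicit. Unset Printing Implicit Defensive.
Import Order.TTheory GRing.Theory Num.Theory.
Import numFieldNormedType.Exports.
Local Open Scope classical_set_scope.
Local Open Scope ring_scope.

Section Defs.
Variables (R : realType) (d : nat).
Notation V := 'rV[R]_d.

Definition enorm (p : V) : R := Num.sqrt (\sum_(i < d) (p 0 i) ^+ 2).

(* Z^d-periodic functions = functions on the torus T^d = R^d / Z^d *)
Definition Zperiodic (T : Type) (f : V -> T) : Prop :=
  forall (x : V) (z : 'rV[int]_d), f (x + map_mx (fun n : int => n%:~R) z) = f x.

Definition grad (f : V -> R) (x : V) : V :=
  \row_(i < d) ('D_(delta_mx 0 i) f x).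

Definition C1 (f : V -> R) : Prop :=
  (forall x, differentiable f x) /\ continuous (grad f).

Definition modulus (w : R -> R) : Prop :=
  w 0 = 0 /\ (forall r, 0 <= r -> 0 <= w r) /\
  (forall r s, 0 <= r -> r <= s -> w r <= w s) /\
  (w x @[x --> 0^'+] --> 0).

Definition coupling (I : interval R) (k : R -> R -> R) (v : V -> R -> R)
    (x : V) (xi : R) : R :=
  Rintegral lebesgue_measure [set` I] (fun eta => k xi eta * (v x xi - v x eta)).

Definition visc_sub (I : interval R) (k : R -> R -> R) (H : V -> V -> R -> R)
    (alpha : R) (v : V -> R -> R) : Prop :=
  forall (xi : R), xi \in I -> forall (x0 : V) (phi : V -> R), C1 phi ->
    (\forall y \near x0, v y xi - phi y <= v x0 xi - phi x0) ->
    alpha * v x0 xi + H x0 (grad phi x0) xi + coupling I k v x0 xi <= 0.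

Definition visc_super (I : interval R) (k : R -> R -> R) (H : V -> V -> R -> R)
    (alpha : R) (v : V -> R -> R) : Prop :=
  forall (xi : R), xi \in I -> forall (x0 : V) (phi : V -> R), C1 phi ->
    (\forall y \near x0, v y xi - phi y >= v x0 xi - phi x0) ->
    alpha * v x0 xi + H x0 (grad phi x0) xi + coupling I k v x0 xi >= 0.

Definition visc_sol (I : interval R) (k : R -> R -> R) (H : V -> V -> R -> R)
    (alpha : R) (v : V -> R -> R) : Prop :=
  Zperiodic v /\
  (forall xi, xi \in I -> continuous (fun x => v x xi)) /\
  (forall x, measurable_fun [set` I] (v x)) /\
  (exists C, forall x xi, xi \in I -> `|v x xi| <= C) /\
  visc_sub I k H alpha v /\ visc_super I k H alpha v.

(* ||D v||_{L^infty(T^d x I)} : supremum of |D_x v(x,xi)| over xi in I and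
   points x where v(.,xi) is differentiable *)
Definition Dnorm (I : interval R) (v : V -> R -> R) : R :=
  sup [set r : R | exists (xi : R) (x : V), [/\ xi \in I,
        differentiable (fun y => v y xi) x & r = enorm (grad (fun y => v y xi) x)]].

Definition Hsup0 (I : interval R) (H : V -> V -> R -> R) : R :=
  sup [set r : R | exists (x : V) (xi : R), xi \in I /\ r = `|H x 0 xi|].

End Defs.

(* The proof bounds the oscillation W of v in the space variable uniformly in
   alpha; the coupling term is then at most 2M + k1 W, so the theorem holds
   with M2 = 1 (the bound does not even need ||Dv||).
   - At a maximum (minimum) point of v(., xi), testing with constants gives
     coupling <= 2M (>= -2M); comparing integrands pointwise then bounds
     every |\int k(xi,eta) (v(x,xi) - v(y,eta)) deta| by 2M + k1 W.
   - At a point where a quadratic c|. - y|^2 touches v(., eta) from above, the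
     subsolution inequality and the growth condition (B1) bound the gradient
     of the quadratic by any K with K^m >= (3M + C2 + k1 W) / C1.
   - A bootstrap with quadratics of shrinking scale turns this into a 3K
     Lipschitz bound; periodicity then gives W <= 3 (d + 1) K.
   - Since m > 1 this self-referential estimate closes, giving a bound on W
     depending only on d, M, k1, C1, C2 and m. *)

From HB Require Import structures.
From mathcomp Require Import all_boot all_order all_algebra.
From mathcomp Require Import all_classical all_reals all_analysis.
From mathcomp Require Import ring lra measurable_realfun.

Set Implicit Arguments.
Unset Strict Implicit.
Unset Printing Implicit Defensive.

Import Order.TTheory GRing.Theory Num.Theory.
Import numFieldNormedType.Exports.
Local Open Scope classical_set_scope.
Local Open Scope ring_scope.

Lemma le_geometric_tail (R : realType) (t a b : R) :
  0 <= a -> (forall n, t <= a / 4 ^+ n + b) -> t <= b.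
Proof.
move=> a0 ht; apply/ler_addgt0Pr => e e0.
pose n := Num.bound (a / e).
have pow_gt : a / e < 4 ^+ n.
  apply: (lt_le_trans (archi_boundP _)); first by rewrite divr_ge0 // ltW.
  by rewrite -natrX ler_nat ltnW // ltn_expl.
apply: (le_trans (ht n)); rewrite addrC lerD2l ler_pdivrMr ?exprn_gt0 //.
by rewrite mulrC -ler_pdivrMr // ltW.
Qed.

Section Torus.
Variables (R : realType) (d : nat).
Notation V := 'rV[R]_d.
Implicit Types (x y p : V) (f : V -> R).

Lemma enorm_ge0 p : 0 <= enorm p.
Proof. exact: sqrtr_ge0. Qed.

Lemma enorm_sqr p : enorm p ^+ 2 = \sum_(i < d) p 0 i ^+ 2.
Proof. by rewrite sqr_sqrtr // sumr_ge0 // => i _; rewrite sqr_ge0. Qed.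

Lemma enormZ (a : R) p : enorm (a *: p) = `|a| * enorm p.
Proof.
rewrite /enorm -sqrtr_sqr -sqrtrM ?sqr_ge0 // mulr_sumr.
by congr Num.sqrt; apply: eq_bigr => i _; rewrite mxE exprMn.
Qed.

Lemma enormN p : enorm (- p) = enorm p.
Proof. by rewrite -scaleN1r enormZ normrN normr1 mul1r. Qed.

Lemma coord_le_enorm p i : `|p 0 i| <= enorm p.
Proof.
rewrite /enorm -sqrtr_sqr; apply: ler_wsqrtr.
by rewrite (bigD1 i) //= lerDl sumr_ge0 // => j _; rewrite sqr_ge0.
Qed.

Lemma mxnorm_le_enorm p : `|p| <= enorm p.
Proof.
rewrite [`|p|]/Num.norm /= mx_normrE; apply/bigmax_leP; split; first exact: enorm_ge0.
by move=> [i j] _ /=; rewrite (ord1 i); exact: coord_le_enorm.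
Qed.

Lemma enorm_le_cube p : (forall i, `|p 0 i| <= 1) -> enorm p <= d%:R + 1.
Proof.
move=> p1; have sum_le_d : enorm p ^+ 2 <= d%:R.
  rewrite enorm_sqr -[d in d%:R]card_ord -sumr_const; apply: ler_sum => i _.
  by rewrite -real_normK ?num_real // exprn_ile1.
have := enorm_ge0 p; nra.
Qed.

Lemma mxnorm_le x (r : R) : 0 <= r -> (forall j, `|x 0 j| <= r) -> `|x| <= r.
Proof.
move=> r0 h; rewrite [`|x|]/Num.norm /= mx_normrE.
by apply/bigmax_leP; split => // -[i j] _ /=; rewrite (ord1 i); exact: h.
Qed.

Lemma coord_le_mxnorm x j : `|x 0 j| <= `|x|.
Proof. by rewrite [`|x|]/Num.norm /= mx_normrE; apply/bigmax_geP; right; exists (0, j). Qed.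

Lemma Zperiodic_unit_rep (T : Type) (g : V -> T) : Zperiodic g ->
  forall x, exists x', `|x'| <= 1 /\ g x' = g x.
Proof.
move=> gper x; pose z : 'rV[int]_d := \row_j (- Num.floor (x 0 j)).
exists (x + map_mx (fun n : int => n%:~R) z); split; last exact: gper.
apply: mxnorm_le => // j; rewrite !mxE intrN.
have lo := real_floor_le (num_real (x 0 j)).
have hi := real_floorD1_gt (num_real (x 0 j)); rewrite intrD in hi.
by rewrite ger0_norm ?subr_ge0 // lerBlDl ltW // addrC.
Qed.

Lemma continuous_max_ball f (r : R) : continuous f ->
  (forall x, exists x', `|x'| <= r /\ f x <= f x') -> exists c, forall x, f x <= f c.
Proof.
move=> fc hr; have [x0 [x0r _]] := hr 0.
pose A := closed_ball_ Num.norm (0 : V) r.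
have inA x : `|x| <= r -> A x by rewrite /A /closed_ball_ /= sub0r normrN.
have cA : compact A.
  apply: bounded_closed_compact; last exact: closed_closed_ball_.
  exists r; split; first by rewrite num_real.
  move=> M rM x; rewrite /A /closed_ball_ /= sub0r normrN => xr.
  exact: le_trans xr (ltW rM).
have [c _ cmax] := compact_EVT_max (ex_intro _ x0 (inA _ x0r)) cA (continuous_subspaceT fc).
exists c => x; have [x' [x'r fx]] := hr x.
by apply: le_trans fx (cmax _ _); rewrite inE; exact: inA.
Qed.

Lemma periodic_max f : continuous f -> Zperiodic f -> exists c, forall x, f x <= f c.
Proof.
move=> fc fper; apply: (@continuous_max_ball _ 1 fc) => x.
by have [x' [x'1 <-]] := Zperiodic_unit_rep fper x; exists x'.
Qed.

Lemma periodic_min f : continuous f -> Zperiodic f -> exists c, forall x, f c <= f x.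
Proof.
move=> fc fper; have [c cmax] : exists c, forall x, - f x <= - f c.
  apply: periodic_max; last by move=> x z; rewrite /= fper.
  by move=> x; apply: continuousN; exact: fc.
by exists c => x; rewrite -lerN2 cmax.
Qed.

(* The quadratic test function  x |-> c |x - y|^2,  written as a combination of
   coordinate maps so that its differentiability is immediate. *)
Definition quad y (c : R) : V -> R :=
  c \*: (\sum_(j < d) ((fun N : V => N 0 j) - cst (y 0 j)) ^+ 2).

Lemma quadE y c x : quad y c x = c * enorm (x - y) ^+ 2.
Proof.
rewrite /quad /= fct_sumE enorm_sqr; congr (_ * _).
by apply: eq_bigr => j _; rewrite !mxE.
Qed.

Lemma quad_ge0 y c x : 0 <= c -> 0 <= quad y c x.
Proof. by move=> c0; rewrite quadE mulr_ge0 // sqr_ge0. Qed.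

Lemma is_derive_coord x v j : is_derive x v (fun N : V => N 0 j) (v 0 j).
Proof.
have @f : {linear V -> R}.
  by exists (fun N : V => N 0 j); do 2![eexists]; do ?[constructor];
     rewrite ?mxE// => ? *; rewrite ?mxE//; move=> ?; rewrite !mxE.
have flin : differentiable f x by exact/linear_differentiable/coord_continuous.
have -> : (fun N : V => N 0 j) = f by [].
apply: DeriveDef; first exact: diff_derivable.
by rewrite deriveE // diff_lin //; exact: coord_continuous.
Qed.

Lemma quad_differentiable y c x : differentiable (quad y c) x.
Proof.
apply: differentiableZ; apply: differentiable_sum => j.
apply: differentiableX; apply: differentiableB; last exact: differentiable_cst.
exact: differentiable_coord.
Qed.

Lemma grad_quad y c x : grad (quad y c) x = (2 * c) *: (x - y).
Proof.
apply/rowP => i; rewrite !mxE.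
have deriv_sq j : is_derive x (delta_mx 0 i)
    (((fun N : V => N 0 j) - cst (y 0 j)) ^+ 2)
    ((2%:R * (x 0 j - y 0 j) ^+ 1) *: ((delta_mx 0 i : V) 0 j - 0)).
  by apply: is_deriveX; exact: (is_deriveB (is_derive_coord _ _ _) (is_derive_cst _ _ _)).
have [_ ->] := is_deriveZ c (is_derive_sum deriv_sq).
rewrite (bigD1 i) //= big1 ?addr0 => [|j ji]; last first.
  by rewrite mxE (negbTE ji) subrr scaler0.
rewrite mxE !eqxx subr0 expr1 /GRing.scale /=; ring.
Qed.

Lemma quad_C1 y c : C1 (quad y c).
Proof.
split; first exact: quad_differentiable.
have -> : grad (quad y c) = fun x => (2 * c) *: (x - y) by apply: funext => x; exact: grad_quad.
move=> x; apply: (@continuousZl_tmp _ _ _ (fun z : V => z - y) (2 * c) x).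
by apply: (@continuousB _ _ _ id (fun _ => y)); [exact: cvg_id | exact: cst_continuous].
Qed.

Lemma grad_cst (a : R) x : grad (fun _ : V => a) x = 0.
Proof. by apply/rowP => i; rewrite !mxE; exact: derive_cst. Qed.

Lemma cst_C1 (a : R) : C1 (fun _ : V => a).
Proof.
split=> [x|]; first exact: differentiable_cst.
by rewrite (funext (grad_cst a)); exact: cst_continuous.
Qed.

(* A bounded continuous function minus a quadratic attains its maximum:
   far from y the quadratic exceeds the oscillation of f. *)
Lemma quad_max f (B : R) y c : continuous f -> (forall x, `|f x| <= B) -> 0 < c ->
  exists x0, forall x, f x - quad y c x <= f x0 - quad y c x0.
Proof.
move=> fc fB c0; have B0 : 0 <= B by apply: le_trans (fB 0).
pose rho := 2 * B / c + 1.
have BcB : c * (2 * B / c) = 2 * B by rewrite mulrCA divff ?gt_eqF // mulr1.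
have twoBc_ge0 : 0 <= 2 * B / c by rewrite divr_ge0 ?mulr_ge0 // ltW.
have gc : continuous (fun x => f x - quad y c x).
  move=> x; apply: continuousB; first exact: fc.
  by apply: differentiable_continuous; exact: quad_differentiable.
apply: (continuous_max_ball (r := `|y| + rho) gc) => x.
have [xy|xy] := leP (enorm (x - y)) rho.
  exists x; split => //; rewrite -[x](subrK y) addrC (le_trans (ler_normD _ _)) //.
  by rewrite lerD2l (le_trans (mxnorm_le_enorm _)).
exists y; split; first by rewrite lerDl /rho; lra.
have -> : quad y c y = 0.
  rewrite quadE subrr /enorm big1 => [|i _]; last by rewrite mxE expr0n.
  by rewrite sqrtr0 expr0n mulr0.
have far : 2 * B <= quad y c x.
  rewrite quadE -BcB ler_pM2l //; apply: (le_trans (_ : _ <= rho ^+ 2)).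
    by rewrite /rho; nra.
  by rewrite ler_sqr ?nnegrE ?enorm_ge0 ?ltW // /rho; lra.
have := fB x; have := fB y; rewrite !ler_norml => /andP[? _] /andP[_ ?].
rewrite subr0; lra.
Qed.

Definition lipschitz_with f (a : R) := forall x y, f x - f y <= a * enorm (x - y).

(* For a viscosity subsolution of a
   coercive equation this is what the equation itself provides. *)
Definition slope_bounded f (K : R) := forall y c x0, 0 < c ->
  (forall x, f x - quad y c x <= f x0 - quad y c x0) -> enorm ((2 * c) *: (x0 - y)) <= K.

Lemma lipschitz_with_mono f a b : a <= b -> lipschitz_with f a -> lipschitz_with f b.
Proof. by move=> ab fa x y; rewrite (le_trans (fa x y)) // ler_wpM2r // enorm_ge0. Qed.

(* One step of the bootstrap: touch f from above at scale r = |x - y| by the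
   quadratic centred at y with c = 2K/r; the maximum point lies within r/4 of y. *)
Lemma lipschitz_improve f (B K a : R) :
  continuous f -> (forall x, `|f x| <= B) -> 0 < K -> 0 <= a -> slope_bounded f K ->
  lipschitz_with f a -> lipschitz_with f (a / 4 + 2 * K).
Proof.
move=> fc fB K0 a0 fK fa x y; set r := enorm (x - y).
have [r0|rpos] := eqVneq r 0; first by have := fa x y; rewrite -/r r0 !mulr0.
have rp : 0 < r by rewrite lt_neqAle eq_sym rpos enorm_ge0.
pose c := 2 * K / r; have c0 : 0 < c by rewrite divr_gt0 // mulr_gt0.
have [x0 x0max] := quad_max y fc fB c0.
have near_y : enorm (x0 - y) <= r / 4.
  have := fK y c x0 c0 x0max; rewrite enormZ ger0_norm; last by rewrite mulr_ge0 // ltW.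
  move=> /(ler_wpM2r (ltW rp)).
  have -> : 2 * c * enorm (x0 - y) * r = 4 * K * enorm (x0 - y).
    by rewrite /c; field; rewrite gt_eqF.
  have -> : r / 4 = K * r / (4 * K) by field; rewrite gt_eqF.
  by rewrite ler_pdivlMr ?mulr_gt0 // mulrC.
have quad_x : quad y c x = 2 * K * r by rewrite quadE -/r /c; field; rewrite gt_eqF.
have := x0max x; have := fa x0 y; have := quad_ge0 y x0 (ltW c0).
have : a * enorm (x0 - y) <= a * (r / 4) by exact: ler_wpM2l.
rewrite quad_x mulrDl; lra.
Qed.

(* Iterating the improvement from any Lipschitz constant L0 gives the
   constant L0 / 4^n + 3K for every n, hence 3K in the limit. *)
Lemma lipschitz_of_slope_bounded f (B K L0 : R) :
  continuous f -> (forall x, `|f x| <= B) -> 0 < K -> 0 <= L0 -> slope_bounded f K ->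
  lipschitz_with f L0 -> lipschitz_with f (3 * K).
Proof.
move=> fc fB K0 L00 fK fL0.
have pow4 n : 0 < (4 : R) ^+ n by rewrite exprn_gt0.
have iter n : lipschitz_with f (L0 / 4 ^+ n + 3 * K).
  elim: n => [|n IH]; first by apply: (lipschitz_with_mono _ fL0); rewrite expr0 divr1; lra.
  have a0 : 0 <= L0 / 4 ^+ n + 3 * K by rewrite addr_ge0 ?divr_ge0 ?mulr_ge0 // ltW.
  apply: (lipschitz_with_mono _ (lipschitz_improve fc fB K0 a0 fK IH)).
  have -> : (L0 / 4 ^+ n + 3 * K) / 4 + 2 * K = L0 / 4 ^+ n.+1 + 3 * K - K / 4.
    by rewrite exprS; field; rewrite gt_eqF.
  lra.
move=> x y; apply: (@le_geometric_tail _ _ (L0 * enorm (x - y))) => [|n].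
  by rewrite mulr_ge0 // enorm_ge0.
by rewrite mulrAC -mulrDl; exact: iter.
Qed.

(* A periodic K-Lipschitz function oscillates by at most K (d + 1): every
   point is congruent to one within the unit cube around any other point. *)
Lemma periodic_oscillation f (K : R) : Zperiodic f -> 0 <= K -> lipschitz_with f K ->
  forall x y, f x - f y <= K * (d%:R + 1).
Proof.
move=> fper K0 fK x y.
have shift_per : Zperiodic (fun w => f (x + w)) by move=> w z /=; rewrite addrA fper.
have [w [w1 fw]] := Zperiodic_unit_rep shift_per (y - x).
rewrite /= [x + (y - x)]addrC subrK in fw; rewrite -fw (le_trans (fK _ _)) //.
rewrite opprD addrA subrr add0r enormN ler_wpM2l // enorm_le_cube // => j.
exact: le_trans (coord_le_mxnorm w j) w1.
Qed.

End Torus.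

Section RealFacts.
Variable R : realType.

Lemma sup_nonneg (S : set R) : (forall r, S r -> 0 <= r) -> 0 <= sup S.
Proof.
move=> S_ge0; have [hs|hs] := pselect (has_sup S); last by rewrite sup_out.
by have [[e Se] _] := hs; exact: le_trans (S_ge0 e Se) (sup_upper_bound hs Se).
Qed.

Lemma powR_le_inv (a b m : R) : 0 < m -> 0 <= a -> 0 <= b -> a `^ m <= b `^ m -> a <= b.
Proof.
move=> m0 a0 b0 h; rewrite leNgt; apply/negP => ba.
by have := gt0_ltr_powR m0 b0 a0 ba; rewrite ltNge h.
Qed.

Lemma superlinear_closure (W c a b m : R) : 0 <= W -> 0 < c -> 0 <= a -> 0 <= b -> 1 < m ->
  (forall K, 0 < K -> a + b * W <= K `^ m -> W <= c * K) ->
  W <= 2 * c * (1 + (a + 2 * b * c) `^ (1 / (m - 1))).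
Proof.
move=> W0 c0 a0 b0 m1 hW.
have root_ge0 := powR_ge0 (a + 2 * b * c) (1 / (m - 1)).
have [->|Wneq0] := eqVneq W 0; first by rewrite mulr_ge0 ?mulr_ge0 // ?ltW //; lra.
pose u := W / (2 * c); have u0 : 0 < u by rewrite divr_gt0 ?mulr_gt0 // lt_neqAle eq_sym Wneq0.
have Wu : W = 2 * c * u by rewrite /u; field; rewrite gt_eqF.
(* K = u = W / 2c would give W <= W / 2, hence u^m < a + bW. *)
have um_lt : u `^ m < a + b * W.
  rewrite ltNge; apply/negP => um_ge; have := hW u u0 um_ge.
  by rewrite {1}Wu; have := mulr_gt0 c0 u0; lra.
rewrite Wu ler_pM2l ?mulr_gt0 //.
have [u_le1|u_gt1] := leP u 1; first lra.
have m10 : 0 < m - 1 by lra.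
have um1_lt : u `^ (m - 1) < a + 2 * b * c.
  rewrite -(ltr_pM2l u0) mulr_powRB1; [|exact: ltW|lra].
  by apply: (lt_le_trans um_lt); rewrite Wu; nra.
have abc0 : 0 <= a + 2 * b * c by rewrite addr_ge0 // !mulr_ge0 // ltW.
have := gt0_ltr_powR (divr_gt0 ltr01 m10) (powR_ge0 u _) abc0 um1_lt.
rewrite -powRrM mulrC div1r mulVf ?gt_eqF // (powRr1 (ltW u0)); lra.
Qed.

Lemma Hsup0_spec (d : nat) (I : interval R) (H : 'rV[R]_d -> 'rV[R]_d -> R -> R) :
  (exists C, forall x xi, xi \in I -> `|H x 0 xi| <= C) ->
  (forall x xi, xi \in I -> `|H x 0 xi| <= Hsup0 I H) /\ 0 <= Hsup0 I H.
Proof.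
move=> [C HC]; split; last by apply: sup_nonneg => _ [x [xi [_ ->]]].
move=> x xi xiI; apply: ub_le_sup; last by exists x, xi.
by exists C => _ [x' [xi' [xi'I ->]]]; exact: HC.
Qed.

End RealFacts.

Section UnitInterval.
Variables (R : realType) (I : interval R).
Hypothesis I1 : lebesgue_measure [set` I] = 1%:E.

Lemma interval_nonempty : exists xi, xi \in I.
Proof.
apply/not_existsP => I0; move: I1; have -> : [set` I] = set0.
  by apply/seteqP; split => // xi /= xiI; apply: (I0 xi).
by rewrite measure0 => -[] /eqP; rewrite eq_sym oner_eq0.
Qed.

Lemma measurable_section (k : R -> R -> R) xi :
  measurable_fun ([set` I] `*` [set` I]) (fun p : R * R => k p.1 p.2) ->
  xi \in I -> measurable_fun [set` I] (k xi).
Proof.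
move=> k_meas xiI; have -> : k xi = (fun p : R * R => k p.1 p.2) \o pair xi by [].
apply: (measurable_comp _ _ k_meas); first by apply: measurableX; exact: measurable_itv.
- by move=> _ [eta etaI <-]; split => //=; rewrite inE in xiI.
- by apply: measurable_funS (pair1_measurable _).
Qed.

Lemma bounded_integrable (f : R -> R) (C : R) : measurable_fun [set` I] f ->
  (forall eta, eta \in I -> `|f eta| <= C) ->
  lebesgue_measure.-integrable [set` I] (EFin \o f).
Proof.
move=> f_meas fC.
apply: (measurable_bounded_integrable (mu := lebesgue_measure) (measurable_itv I)) => //.
  by change (lebesgue_measure [set` I] < +oo)%E; rewrite I1 ltry.
exists C; split; first by rewrite num_real.
by move=> M CM eta etaI; apply: le_trans (ltW CM); exact: fC.
Qed.

Lemma Rintegral_le_shift (f g : R -> R) (c : R) :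
  lebesgue_measure.-integrable [set` I] (EFin \o f) ->
  lebesgue_measure.-integrable [set` I] (EFin \o g) ->
  (forall eta, eta \in I -> f eta <= g eta + c) ->
  Rintegral lebesgue_measure [set` I] f <= Rintegral lebesgue_measure [set` I] g + c.
Proof.
move=> f_int g_int fg.
have c_int : lebesgue_measure.-integrable [set` I] (EFin \o (fun _ => c)).
  by apply: (bounded_integrable (C := `|c|)) => //; exact: measurable_cst.
have gc_int : lebesgue_measure.-integrable [set` I] (EFin \o (fun eta => g eta + c)).
  have -> : EFin \o (fun eta => g eta + c) = ((EFin \o g) \+ (EFin \o fun _ => c))%E by [].
  by apply: integrableD => //; exact: measurable_itv.
have fine1 : fine (lebesgue_measure [set` I]) = 1 by rewrite I1.
have f_le : Rintegral lebesgue_measure [set` I] f <=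
    Rintegral lebesgue_measure [set` I] (fun eta => g eta + c).
  by apply: le_Rintegral.
apply: le_trans f_le _.
by rewrite RintegralD // Rintegral_cst ?fine1 ?mulr1.
Qed.

End UnitInterval.

Definition x_oscillation (R : realType) (d : nat) (I : interval R)
    (v : 'rV[R]_d -> R -> R) : R :=
  sup [set r | exists eta (z w : 'rV[R]_d), eta \in I /\ r = v z eta - v w eta].

(* The explicit bound on the oscillation: the output of superlinear_closure
   for c = 3(d + 1), a = (3M + C2)/C1 and b = k1/C1. *)
Definition oscillation_const (R : realType) (d : nat) (M k1 C1 C2 m : R) : R :=
  2 * (3 * (d%:R + 1)) *
  (1 + ((3 * M + C2) / C1 + 2 * (k1 / C1) * (3 * (d%:R + 1))) `^ (1 / (m - 1))).

Section APrioriBound.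
Variables (R : realType) (d : nat) (I : interval R) (k : R -> R -> R) (k1 : R).
Variables (H : 'rV[R]_d -> 'rV[R]_d -> R -> R) (M alpha : R) (v : 'rV[R]_d -> R -> R).
Notation W := (x_oscillation I v).
Notation integral f := (Rintegral lebesgue_measure [set` I] f).

Hypothesis I1 : lebesgue_measure [set` I] = 1%:E.
Hypothesis k_meas : measurable_fun ([set` I] `*` [set` I]) (fun p : R * R => k p.1 p.2).
Hypothesis k_bound : forall xi eta, xi \in I -> eta \in I -> 0 <= k xi eta <= k1.
Hypothesis H0_bound : forall x xi, xi \in I -> `|H x 0 xi| <= M.
Hypothesis alpha_gt0 : 0 < alpha.
Hypothesis v_sol : visc_sol I k H alpha v.
Hypothesis v_bound : forall x xi, xi \in I -> `|v x xi| <= M / alpha.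

Let v_per eta : Zperiodic (fun x => v x eta).
Proof. by case: v_sol => v_per _ x z; rewrite v_per. Qed.

Let v_cont eta : eta \in I -> continuous (fun x => v x eta).
Proof. by case: v_sol => _ [v_cont _]; exact: v_cont. Qed.

Let v_sub : visc_sub I k H alpha v.
Proof. by case: v_sol => _ [_ [_ [_ []]]]. Qed.

Let v_super : visc_super I k H alpha v.
Proof. by case: v_sol => _ [_ [_ [_ []]]]. Qed.

Lemma alpha_v_bound x eta : eta \in I -> `|alpha * v x eta| <= M.
Proof.
move=> etaI; rewrite normrM gtr0_norm //.
have := ler_wpM2l (ltW alpha_gt0) (v_bound x etaI).
by rewrite [alpha * (M / alpha)]mulrC divfK ?gt_eqF.
Qed.

(* Testing the sub-/supersolution property with constants at a maximum /
   minimum point of v(., eta) bounds the coupling term there. *)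
Lemma coupling_at_max eta xM : eta \in I -> (forall x, v x eta <= v xM eta) ->
  coupling I k v xM eta <= 2 * M.
Proof.
move=> etaI xM_max; have touch : \forall x \near xM, v x eta - 0 <= v xM eta - 0.
  by apply: filterE => x; rewrite !subr0.
have := v_sub etaI (cst_C1 d 0) touch; rewrite grad_cst.
have := alpha_v_bound xM etaI; have := H0_bound xM etaI.
by rewrite !ler_norml => /andP[? ?] /andP[? ?]; lra.
Qed.

Lemma coupling_at_min eta xm : eta \in I -> (forall x, v xm eta <= v x eta) ->
  - (2 * M) <= coupling I k v xm eta.
Proof.
move=> etaI xm_min; have touch : \forall x \near xm, v x eta - 0 >= v xm eta - 0.
  by apply: filterE => x; rewrite !subr0.
have := v_super etaI (cst_C1 d 0) touch; rewrite grad_cst.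
have := alpha_v_bound xm etaI; have := H0_bound xm etaI.
by rewrite !ler_norml => /andP[? ?] /andP[? ?]; lra.
Qed.

Lemma oscillation_upper eta z w : eta \in I -> v z eta - v w eta <= W.
Proof.
move=> etaI; apply: ub_le_sup; last by exists eta, z, w.
exists (2 * (M / alpha)) => _ [eta' [z' [w' [eta'I ->]]]].
by have := v_bound z' eta'I; have := v_bound w' eta'I; rewrite !ler_norml; lra.
Qed.

Lemma oscillation_ge0 : 0 <= W.
Proof.
have [xi xiI] := interval_nonempty I1.
by have := oscillation_upper 0 0 xiI; rewrite subrr.
Qed.

Lemma integrable_integrand xi z w : xi \in I ->
  lebesgue_measure.-integrable [set` I] (EFin \o (fun eta => k xi eta * (v z xi - v w eta))).
Proof.
move=> xiI; apply: (bounded_integrable I1 (C := k1 * (2 * (M / alpha)))).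
  apply: measurable_funM; first exact: measurable_section.
  by apply: measurable_funB; [exact: measurable_cst | case: v_sol => _ [_ []]].
move=> eta etaI; have /andP[k_ge0 k_le] := k_bound xiI etaI.
rewrite normrM ger0_norm // ler_pM //.
by have := v_bound z xiI; have := v_bound w etaI; rewrite !ler_norml; lra.
Qed.

(* The nonlocal term with two different space points is controlled by the
   coupling at extremal points plus k1 times the oscillation. *)
Lemma integral_bound xi z w : xi \in I ->
  `|integral (fun eta => k xi eta * (v z xi - v w eta))| <= 2 * M + k1 * W.
Proof.
move=> xiI; have W0 := oscillation_ge0.
have [xM xM_max] := periodic_max (v_cont xiI) (v_per xi).
have [xm xm_min] := periodic_min (v_cont xiI) (v_per xi).
rewrite ler_norml; apply/andP; split.
- have := coupling_at_min xiI xm_min.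
  have : coupling I k v xm xi <= integral (fun eta => k xi eta * (v z xi - v w eta)) + k1 * W.
    apply: Rintegral_le_shift; rewrite ?integrable_integrand // => eta etaI.
    have /andP[k_ge0 k_le] := k_bound xiI etaI.
    have := xm_min z; have := oscillation_upper w xm etaI; nra.
  lra.
- have := coupling_at_max xiI xM_max.
  have : integral (fun eta => k xi eta * (v z xi - v w eta)) <= coupling I k v xM xi + k1 * W.
    apply: Rintegral_le_shift; rewrite ?integrable_integrand // => eta etaI.
    have /andP[k_ge0 k_le] := k_bound xiI etaI.
    have := xM_max z; have := oscillation_upper xM w etaI; nra.
  lra.
Qed.

Variables C1 C2 m : R.
Hypotheses (C1_gt0 : 0 < C1) (C2_ge0 : 0 <= C2) (m_gt1 : 1 < m).
Hypothesis B1 : forall x p xi, xi \in I -> C1 * (enorm p `^ m) - C2 <= H x p xi.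
Hypothesis v_lip : exists L, forall x y xi, xi \in I -> `|v x xi - v y xi| <= L * enorm (x - y).

(* Coercivity: at a point where a quadratic touches v(., eta) from above, the
   subsolution inequality and the integral bound force  C1 |p|^m <= 3M + C2 + k1 W. *)
Lemma slope_bounded_solution eta (K : R) : eta \in I -> 0 < K ->
  (3 * M + C2) / C1 + k1 / C1 * W <= K `^ m -> slope_bounded (fun x => v x eta) K.
Proof.
move=> etaI K0 K_large y c x0 c0 x0_max.
have touch : \forall x \near x0, v x eta - quad y c x <= v x0 eta - quad y c x0.
  exact: filterE.
have := v_sub etaI (quad_C1 y c) touch; rewrite grad_quad.
set p := (2 * c) *: (x0 - y) => sub_ineq.
have := integral_bound x0 x0 etaI; rewrite -/(coupling I k v x0 eta) ler_norml.
move=> /andP[coupling_lo _].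
have := B1 x0 p etaI; have := alpha_v_bound x0 etaI; rewrite ler_norml => /andP[? _].
move=> growth; apply: (powR_le_inv (m := m)).
- exact: lt_trans ltr01 m_gt1.
- exact: enorm_ge0.
- exact: ltW.
apply: le_trans K_large.
have -> : (3 * M + C2) / C1 + k1 / C1 * W = (3 * M + C2 + k1 * W) / C1.
  by field; rewrite gt_eqF.
rewrite ler_pdivlMr // mulrC; lra.
Qed.

(* Each admissible K yields a 3K-Lipschitz bound on every v(., eta), hence an
   oscillation bound by periodicity. *)
Lemma oscillation_le_scale (K : R) : 0 < K ->
  (3 * M + C2) / C1 + k1 / C1 * W <= K `^ m -> W <= 3 * (d%:R + 1) * K.
Proof.
move=> K0 K_large; have [xi xiI] := interval_nonempty I1.
apply: ge_sup; first by exists 0, xi, 0, 0; rewrite subrr.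
move=> _ [eta [z [w [etaI ->]]]]; have [L v_lipL] := v_lip.
have lipL : lipschitz_with (fun x => v x eta) `|L|.
  move=> x y /=; apply: le_trans (ler_norm _) _; apply: le_trans (v_lipL x y eta etaI) _.
  by rewrite ler_wpM2r ?enorm_ge0 ?ler_norm.
have lip3K := lipschitz_of_slope_bounded (v_cont etaI) (fun x => v_bound x etaI) K0
  (normr_ge0 L) (slope_bounded_solution etaI K0 K_large) lipL.
have := periodic_oscillation (v_per eta) (_ : 0 <= 3 * K) lip3K z w.
by rewrite mulrAC; apply; rewrite mulr_ge0 // ltW.
Qed.

Let k1_ge0 : 0 <= k1.
Proof.
have [xi xiI] := interval_nonempty I1.
by have /andP[k_ge0 k_le] := k_bound xiI xiI; exact: le_trans k_le.
Qed.

Let M_ge0 : 0 <= M.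
Proof. by have [xi xiI] := interval_nonempty I1; exact: le_trans (H0_bound 0 xiI). Qed.

Lemma oscillation_le : W <= oscillation_const d M k1 C1 C2 m.
Proof.
apply: (superlinear_closure oscillation_ge0 _ _ _ m_gt1 oscillation_le_scale).
- by rewrite mulr_gt0 // ltr_wpDl.
- by rewrite divr_ge0 ?addr_ge0 ?mulr_ge0 // ltW.
- by rewrite divr_ge0 // ltW.
Qed.

End APrioriBound.

Theorem mainTheorem6 (R : realType) (d : nat) (I : interval R)
  (k : R -> R -> R) (k0 k1 : R) (H : 'rV[R]_d -> 'rV[R]_d -> R -> R) :
  (* I finite interval of length 1 *)
  lebesgue_measure [set` I] = 1%:E ->
  (* k Borel on I x I with 0 < k0 <= k <= k1 *)
  measurable_fun ([set` I] `*` [set` I]) (fun p : R * R => k p.1 p.2) ->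
  0 < k0 ->
  (forall xi eta, xi \in I -> eta \in I -> k0 <= k xi eta <= k1) ->
  (* H in C(T^d x R^d) (x) B(I), H(.,p,.) bounded for each p *)
  (forall p xi, Zperiodic (fun y => H y p xi)) ->
  (forall xi, xi \in I -> continuous (fun xp : 'rV[R]_d * 'rV[R]_d => H xp.1 xp.2 xi)) ->
  (forall x p, measurable_fun [set` I] (H x p)) ->
  (forall p, exists C, forall x xi, xi \in I -> `|H x p xi| <= C) ->
  (* (B1) *)
  (exists C1 C2 m, [/\ 0 < C1, 0 < C2, 1 < m &
     forall x p xi, xi \in I -> C1 * (enorm p `^ m) - C2 <= H x p xi]) ->
  (* (B2) *)
  (forall Rr, 0 < Rr -> exists w, modulus w /\
     forall x y p xi, xi \in I -> enorm p <= Rr ->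
       `|H x p xi - H y p xi| <= w (enorm (x - y))) ->
  exists M1 M2 : R, 0 < M1 /\ 0 < M2 /\
    forall (alpha : R) (v : 'rV[R]_d -> R -> R), 0 < alpha ->
      visc_sol I k H alpha v ->
      (forall x xi, xi \in I -> `|v x xi| <= Hsup0 I H / alpha) ->
      (exists L, forall x y xi, xi \in I -> `|v x xi - v y xi| <= L * enorm (x - y)) ->
      forall (x y : 'rV[R]_d) (xi : R), xi \in I ->
        `|Rintegral lebesgue_measure [set` I]
            (fun eta => k xi eta * (v x xi - v y eta))| <= M1 + M2 * Dnorm I v.
Proof.
move=> I1 k_meas k0_gt0 k_between _ _ _ H_bdd [C1 [C2 [m [C1_gt0 C2_gt0 m_gt1 B1]]]] _.
have k_bound xi eta : xi \in I -> eta \in I -> 0 <= k xi eta <= k1.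
  move=> xiI etaI; have /andP[k0_le ->] := k_between xi eta xiI etaI.
  by rewrite (le_trans (ltW k0_gt0)).
have [xi0 xi0I] := interval_nonempty I1.
have k1_ge0 : 0 <= k1.
  by have /andP[k_ge0 k_le] := k_bound xi0 xi0 xi0I xi0I; exact: le_trans k_le.
have [H0_bound M_ge0] := Hsup0_spec (H_bdd 0).
pose W0 := oscillation_const d (Hsup0 I H) k1 C1 C2 m.
have W0_ge0 : 0 <= W0.
  by rewrite mulr_ge0 ?mulr_ge0 ?addr_ge0 ?powR_ge0 //.
exists (2 * Hsup0 I H + k1 * W0 + 1), 1; split; last split => //.
  by have := mulr_ge0 k1_ge0 W0_ge0; lra.
move=> alpha v alpha_gt0 v_sol v_bound v_lip x y xi xiI.
have osc_le := oscillation_le I1 k_meas k_bound H0_bound alpha_gt0 v_sol v_bound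
  C1_gt0 (ltW C2_gt0) m_gt1 B1 v_lip.
have Dnorm_ge0 : 0 <= Dnorm I v.
  by apply: sup_nonneg => _ [? [? [_ _ ->]]]; exact: enorm_ge0.
apply: le_trans (integral_bound I1 k_meas k_bound H0_bound alpha_gt0 v_sol v_bound x y xiI) _.
by have := ler_wpM2l k1_ge0 osc_le; rewrite -/W0; lra.
Qed.
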